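(* Let $H$ be a graph, $v\in V(H)$, and let $G$ be the graph obtained from $H$ by attaching a path at $v$: new vertices $v_1,\ldots,v_m$ are added together with the edges $\{v_{i},v_{i+1}\}$ for $i=0,\ldots,m-1$, where $v_0=v$. If $A\in\mathcal{S}(G)$, $X\in\overline{\mathcal{S}_0}(G^c)$, and $AX-XA=0$, then $X\in\overline{\mathcal{S}_0}(G'^c)$, where $G'=G+\{\{v_i,v_j\}: 0\le i<j\le m\}$; that is, $x_{v_iv_j}=0$ for all $0\le i<j\le m$.
   Context: All graphs are finite, simple, undirected. For a graph $G$ on $n$ vertices labelled $1,\ldots,n$, $\mathcal{S}(G)$ is the set of real symmetric $n\times n$ matrices $A=(a_{ij})$ with $a_{ij}\neq0$ iff $\{i,j\}\in E(G)$ for $i\neq j$ (diagonal arbitrary). For a graph $K$ on the same vertex set, $\overline{\mathcal{S}_0}(K)$ is the set of real symmetric matrices whose $(i,j)$ entry is zero whenever $i=j$ or $\{i,j\}\notin E(K)$; $K^c$ is the complement of $K$. $G+F$ denotes the graph obtained from $G$ by adding the edge set $F$. *)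

From HB Require Import structures.
From mathcomp Require Import all_boot all_order all_algebra.
Set Implicit Arguments. Unset Strict Implicit. Unset Printing Implicit Defensive.
Import Order.TTheory GRing.Theory Num.Theory.
Local Open Scope ring_scope.

Definition simple_graph (T : finType) (e : rel T) : Prop :=
  symmetric e /\ irreflexive e.

Definition compl_graph (T : finType) (e : rel T) : rel T :=
  fun i j => (i != j) && ~~ e i j.

Definition S_graph (R : realFieldType) (N : nat) (e : rel 'I_N)
    (A : 'M[R]_N) : Prop :=
  A^T = A /\ forall i j : 'I_N, i != j -> (A i j != 0) = e i j.

Definition S0bar (R : realFieldType) (N : nat) (e : rel 'I_N)
    (X : 'M[R]_N) : Prop :=
  X^T = X /\ forall i j : 'I_N, (i == j) || ~~ e i j -> X i j = 0.

(* Attaching a path at v : 'I_n with m new vertices.  The new graph lives on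
   'I_(n + m): old vertex a is [lshift m a], new vertex v_k (1 <= k <= m) is
   [rshift n (k-1)]. *)
Definition attach_path (n m : nat) (eH : rel 'I_n) (v : 'I_n) : rel 'I_(n + m) :=
  fun x y =>
    match split x, split y with
    | inl a, inl b => eH a b
    | inl a, inr j => (a == v) && (nat_of_ord j == 0%N)
    | inr j, inl a => (a == v) && (nat_of_ord j == 0%N)
    | inr i, inr j => (i.+1 == j :> nat) || (j.+1 == i :> nat)
    end.

Definition path_vertex (n m : nat) (v : 'I_n) (k : 'I_m.+1) : 'I_(n + m) :=
  if nat_of_ord k == 0%N then lshift m v
  else insubd (lshift m v) (n + k.-1)%N.

Definition add_path_clique (n m : nat) (v : 'I_n) (e : rel 'I_(n + m))
  : rel 'I_(n + m) :=
  fun x y => e x y ||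
    [exists k : 'I_m.+1, exists l : 'I_m.+1,
       (k < l)%N &&
       (((x == path_vertex v k) && (y == path_vertex v l)) ||
        ((y == path_vertex v k) && (x == path_vertex v l)))].

From HB Require Import structures.
From mathcomp Require Import all_boot all_order all_algebra.
From mathcomp Require Import zify.
Set Implicit Arguments. Unset Strict Implicit. Unset Printing Implicit Defensive.
Import Order.TTheory GRing.Theory Num.Theory.
Local Open Scope ring_scope.

(* For l < k < m, the (v_(k+1), v_(l+1))
   entry of AX = XA only involves the neighbours v_k, v_(k+2) of v_(k+1) and
   v_l, v_(l+2) of v_(l+1).  It expresses A(v_(l+1), v_l) X(v_(k+1), v_l) through
   entries of X between path vertices that are closer together, or equally far
   apart but further along the path.  X vanishes on the diagonal and on edges, so
   induction on the distance, and for a fixed distance downwards along the path,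
   kills all of these; as A(v_(l+1), v_l) <> 0, X(v_(k+1), v_l) = 0. *)

Section GraphMatrices.
Variables (R : realFieldType) (N : nat) (e : rel 'I_N).

Lemma S_graph_neq0 (A : 'M[R]_N) i j : S_graph e A -> i != j -> e i j -> A i j != 0.
Proof. by case=> _ Ae ij eij; rewrite Ae. Qed.

Lemma S_graph_eq0 (A : 'M[R]_N) i j : S_graph e A -> i != j -> ~~ e i j -> A i j = 0.
Proof. by case=> _ Ae ij /negbTE; rewrite -(Ae _ _ ij) => /negbFE/eqP. Qed.

Lemma S0bar_sym (X : 'M[R]_N) : S0bar e X -> forall i j, X i j = X j i.
Proof. by case=> XT _ i j; rewrite -{1}XT mxE. Qed.

Lemma S0bar_diag (X : 'M[R]_N) : S0bar e X -> forall i, X i i = 0.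
Proof. by case=> _ X0 i; rewrite X0 ?eqxx. Qed.

Lemma S0bar_compl_edge (X : 'M[R]_N) i j : S0bar (compl_graph e) X -> e i j -> X i j = 0.
Proof. by case=> _ X0 eij; rewrite X0 // /compl_graph eij andbF orbT. Qed.

Lemma commute_sym_row_sum (A X : 'M[R]_N) a b :
  A^T = A -> X^T = X -> A *m X = X *m A ->
  \sum_x A a x * X b x = \sum_x A b x * X a x.
Proof.
have sym (M : 'M[R]_N) i j : M^T = M -> M i j = M j i by move=> MT; rewrite -{1}MT mxE.
move=> AT XT /(congr1 (fun M : 'M[R]_N => M a b)); rewrite !mxE => AXab.
rewrite (eq_bigr (fun x => A a x * X x b)) ?AXab => [|x _]; last by rewrite (sym X).
by apply: eq_bigr => x _; rewrite mulrC (sym A).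
Qed.

End GraphMatrices.

Section PendantPath.
Variables (R : realFieldType) (N m : nat) (e : rel 'I_N) (p : nat -> 'I_N).
Hypothesis p_inj : forall k l, (k <= m)%N -> (l <= m)%N -> p k = p l -> k = l.
Hypothesis path_edge : forall k, (k < m)%N -> e (p k.+1) (p k).
Hypothesis path_adj : forall k, (k < m)%N -> forall x, e (p k.+1) x ->
  x = p k \/ (k.+1 < m)%N /\ x = p k.+2.

Lemma path_neq k l : (k <= m)%N -> (l <= m)%N -> k != l -> p k != p l.
Proof. by move=> km lm /eqP kl; apply/eqP => /p_inj; auto. Qed.

Variables (A X : 'M[R]_N).
Hypothesis A_G : S_graph e A.

Lemma pendant_row_sum (g : 'I_N -> R) k : (k < m)%N ->
  ((k.+1 < m)%N -> g (p k.+2) = 0) ->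
  \sum_x A (p k.+1) x * g x = A (p k.+1) (p k.+1) * g (p k.+1) + A (p k.+1) (p k) * g (p k).
Proof.
move=> km g_far; have back : p k != p k.+1 by apply: path_neq; lia.
rewrite (bigD1 (p k.+1)) //= (bigD1 (p k)) /=; last by rewrite back.
rewrite addrA big1 ?addr0 // => x /andP[xk1 xk0].
case: (boolP (e (p k.+1) x)) => [/(path_adj km)[/eqP | [km1 ->]] | nadj].
- by rewrite (negbTE xk0).
- by rewrite g_far ?mulr0.
- by rewrite (S_graph_eq0 A_G) ?mul0r // eq_sym.
Qed.

Hypothesis X_G : S0bar (compl_graph e) X.
Hypothesis AX_XA : A *m X = X *m A.

Lemma pendant_commute_step l k : (l < k < m)%N ->
  X (p k.+1) (p l.+1) = 0 -> X (p k) (p l.+1) = 0 -> X (p k.+1) (p l.+2) = 0 ->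
  ((k.+1 < m)%N -> X (p k.+2) (p l.+1) = 0) ->
  X (p k.+1) (p l) = 0.
Proof.
move=> lkm Xkl Xk_l Xk_l2 Xfar.
have := commute_sym_row_sum (p k.+1) (p l.+1) A_G.1 X_G.1 AX_XA.
have [km lm] : (k < m)%N /\ (l < m)%N by lia.
have Xfar' : (k.+1 < m)%N -> X (p l.+1) (p k.+2) = 0.
  by move=> /Xfar; rewrite (S0bar_sym X_G).
rewrite (pendant_row_sum km Xfar') (pendant_row_sum lm (fun _ => Xk_l2)).
rewrite [X (p l.+1) _](S0bar_sym X_G) [X (p l.+1) _](S0bar_sym X_G).
rewrite Xkl Xk_l !mulr0 !add0r => /esym/eqP.
rewrite mulf_eq0 => /orP[|/eqP //].
by rewrite (negbTE (S_graph_neq0 A_G _ _)) ?path_edge ?path_neq //; lia.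
Qed.

Lemma pendant_path_eq0_le i j : (i <= j <= m)%N -> X (p j) (p i) = 0.
Proof.
move: {2}(j - i)%N (erefl (j - i)%N) => d; elim/ltn_ind: d i j => d IHd i j dji.
case: d IHd dji => [|[|d']] IHd dji ijm.
- have -> : j = i by lia.
  exact: (S0bar_diag X_G).
- have -> : j = i.+1 by lia.
  by apply: S0bar_compl_edge X_G _; apply: path_edge; lia.
have shorter i' j' : (i' <= j' <= m)%N -> (j' - i' < d'.+2)%N -> X (p j') (p i') = 0.
  by move=> ? ?; apply: (IHd (j' - i')%N).
have [t jtm] : exists t, (j + t = m)%N by exists (m - j)%N; lia.
elim: t => [|t IHt] in i j dji ijm jtm *;
  (have -> : j = (i + d'.+1).+1 by lia);
  apply: pendant_commute_step; try apply: shorter; try lia.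
by move=> _; apply: IHt; lia.
Qed.

Lemma pendant_path_eq0 i j : (i <= m)%N -> (j <= m)%N -> X (p i) (p j) = 0.
Proof.
move=> im jm; have [ij | ji] := leqP i j.
  by rewrite (S0bar_sym X_G) pendant_path_eq0_le ?ij.
by rewrite pendant_path_eq0_le // (ltnW ji).
Qed.

End PendantPath.

Section AttachPath.
Variables (n m : nat) (eH : rel 'I_n) (v : 'I_n).
Local Notation G := (@attach_path n m eH v).

Definition path_vertex_nat (k : nat) : 'I_(n + m) :=
  if k is k'.+1 then insubd (lshift m v) (n + k') else lshift m v.

Lemma path_vertexE (k : 'I_m.+1) : path_vertex v k = path_vertex_nat k.
Proof. by case: k => [[|k] ?]. Qed.

Local Notation p := path_vertex_nat.

Lemma val_path_vertex_nat0 : nat_of_ord (p 0) = v.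
Proof. by []. Qed.

Lemma val_path_vertex_natS k : (k < m)%N -> nat_of_ord (p k.+1) = (n + k)%N.
Proof. by move=> km; rewrite /= val_insubd; case: ifP => //; lia. Qed.

Arguments path_vertex_nat : simpl never.

Lemma path_vertex_nat_inj k l : (k <= m)%N -> (l <= m)%N -> p k = p l -> k = l.
Proof.
move=> km lm /(congr1 (@nat_of_ord _)); have := ltn_ord v.
case: k km => [|k] km; case: l lm => [|l] lm;
  rewrite ?val_path_vertex_nat0 ?val_path_vertex_natS //; lia.
Qed.

Lemma split_path_vertex_nat0 : split (p 0) = inl v.
Proof.
case: splitP => [a av | t tv]; first by congr inl; apply: val_inj.
by move: tv; rewrite val_path_vertex_nat0; have := ltn_ord v; lia.
Qed.

Lemma split_path_vertex_natS k (km : (k < m)%N) : split (p k.+1) = inr (Ordinal km).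
Proof.
case: splitP => [a | t]; rewrite val_path_vertex_natS //.
  by have := ltn_ord a; lia.
by move=> tk; congr inr; apply: val_inj => /=; lia.
Qed.

Lemma attach_path_edge k : (k < m)%N -> G (p k.+1) (p k).
Proof.
move=> km; rewrite /attach_path split_path_vertex_natS.
case: k km => [|k] km; first by rewrite split_path_vertex_nat0 eqxx.
by rewrite split_path_vertex_natS /= ?eqxx ?orbT //; lia.
Qed.

Lemma attach_path_adj k : (k < m)%N -> forall x, G (p k.+1) x ->
  x = p k \/ (k.+1 < m)%N /\ x = p k.+2.
Proof.
move=> km x; rewrite /attach_path split_path_vertex_natS.
case: splitP => [a xa | t xt].
  by case/andP => /eqP av /= /eqP k0; left; apply: ord_inj; rewrite xa av k0.
move: (ltn_ord t) => tm /= /orP[/eqP kt | /eqP tk].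
  right; split; first lia.
  by apply: ord_inj; rewrite xt val_path_vertex_natS; lia.
left; case: k km tk => [|k] km tk; first by [].
by apply: ord_inj; rewrite xt val_path_vertex_natS; lia.
Qed.

End AttachPath.

Theorem corollary3p7 (R : realFieldType) (n m : nat) (eH : rel 'I_n) (v : 'I_n)
    (A X : 'M[R]_(n + m)) :
  simple_graph eH ->
  S_graph (@attach_path n m eH v) A ->
  S0bar (compl_graph (@attach_path n m eH v)) X ->
  A *m X - X *m A = 0 ->
  S0bar (compl_graph (@add_path_clique n m v (@attach_path n m eH v))) X.
Proof.
move=> _ A_G X_G /eqP; rewrite subr_eq0 => /eqP AX_XA; split; first exact: X_G.1.
have path_eq0 := pendant_path_eq0 (@path_vertex_nat_inj n m v)
  (@attach_path_edge n m eH v) (@attach_path_adj n m eH v) A_G X_G AX_XA.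
move=> i j; rewrite /compl_graph /add_path_clique negb_and negbK.
case: eqVneq => [-> _ | _ /=]; first exact: (S0bar_diag X_G).
case/negPn/orP=> [/(S0bar_compl_edge X_G) // | /existsP[k /existsP[l /andP[_]]]].
rewrite !path_vertexE => /orP[] /andP[/eqP-> /eqP->];
  by apply: path_eq0; rewrite -ltnS ltn_ord.
Qed.
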